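(* Let $(X,(\cdot,\cdot|\cdot))$ be a 2-inner product space over $\mathbb{K}\in\{\mathbb{R},\mathbb{C}\}$, let $n$ be a positive integer, let $z_1,\dots,z_n,z\in X$ and $\mu_1,\dots,\mu_n\in\mathbb{K}$. Define $A_1=\max_{1\le i\le n}|\mu_i|^2\sum_{i=1}^n\|z_i|z\|^2$; $A_2(\alpha)=\big(\sum_{i=1}^n|\mu_i|^{2\alpha}\big)^{1/\alpha}\big(\sum_{i=1}^n\|z_i|z\|^{2\beta}\big)^{1/\beta}$ for $\alpha>1$, $\frac1\alpha+\frac1\beta=1$; $A_3=\sum_{i=1}^n|\mu_i|^2\max_{1\le i\le n}\|z_i|z\|^2$; and $B_1=\max_{1\le i\le n}|\mu_i|^2\sum_{1\le i\ne j\le n}|(z_i,z_j|z)|$; $B_2(\gamma)=(n-1)^{1/\gamma}\big(\sum_{i=1}^n|\mu_i|^{2\gamma}\big)^{1/\gamma}\big(\sum_{1\le i\ne j\le n}|(z_i,z_j|z)|^{\delta}\big)^{1/\delta}$ for $\gamma>1$, $\frac1\gamma+\frac1\delta=1$; $B_3=(n-1)\sum_{i=1}^n|\mu_i|^2\max_{1\le i\ne j\le n}|(z_i,z_j|z)|$. Then for every choice of $A\in\{A_1,A_2(\alpha),A_3\}$ and $B\in\{B_1,B_2(\gamma),B_3\}$ (with any admissible $\alpha,\gamma$), \[ \Big\|\sum_{i=1}^n\mu_iz_i\,\Big|\,z\Big\|^2\le A+B. \]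
   Context: A 2-inner product on a linear space $X$ of dimension greater than $1$ over $\mathbb{K}$ ($\mathbb{K}=\mathbb{R}$ or $\mathbb{C}$) is a function $(\cdot,\cdot|\cdot):X\times X\times X\to\mathbb{K}$ such that for all $x,x',y,z\in X$ and $\alpha\in\mathbb{K}$: (i) $(x,x|z)\ge 0$, and $(x,x|z)=0$ iff $x$ and $z$ are linearly dependent; (ii) $(x,x|z)=(z,z|x)$; (iii) $(y,x|z)=\overline{(x,y|z)}$; (iv) $(\alpha x,y|z)=\alpha(x,y|z)$; (v) $(x+x',y|z)=(x,y|z)+(x',y|z)$. The associated 2-norm is $\|x|z\|=\sqrt{(x,x|z)}$. Sums and maxima indexed by $1\le i\ne j\le n$ run over all ordered pairs $(i,j)$ with $i\ne j$. *)

From HB Require Import structures.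
From mathcomp Require Import all_boot all_order all_algebra.
From mathcomp Require Import reals exp.
From mathcomp Require Import complex.
Set Implicit Arguments. Unset Strict Implicit. Unset Printing Implicit Defensive.
Import Order.TTheory GRing.Theory Num.Theory.
Local Open Scope ring_scope.

Section TwoInnerProduct.
Variables (K : numFieldType) (X : lmodType K).

Definition lin_dep (x z : X) : Prop :=
  exists a b : K, (a != 0 \/ b != 0) /\ a *: x + b *: z = 0.

(** [ip] is a 2-inner product on X (over K with conjugation [cj]);
    X has dimension greater than 1. *)
Definition is_2ip (cj : K -> K) (ip : X -> X -> X -> K) : Prop :=
  (exists x y : X, ~ lin_dep x y) /\
  forall (x x' y z : X) (a : K),
    0 <= ip x x z /\
    (ip x x z = 0 <-> lin_dep x z) /\
    ip x x z = ip z z x /\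
    ip y x z = cj (ip x y z) /\
    ip (a *: x) y z = a * ip x y z /\
    ip (x + x') y z = ip x y z + ip x' y z.
End TwoInnerProduct.

Section Cor.
Variables (R : realType) (K : numFieldType).
Variable absK : K -> R.

Definition tnorm (X : lmodType K) (ip : X -> X -> X -> K) (x z : X) : R :=
  Num.sqrt (absK (ip x x z)).

Definition cor24_claim (cj : K -> K) : Prop :=
  forall (X : lmodType K) (ip : X -> X -> X -> K), is_2ip cj ip ->
  forall (n : nat), (0 < n)%N ->
  forall (zs : 'I_n -> X) (z : X) (mu : 'I_n -> K),
  let nz i := tnorm ip (zs i) z in
  let A1 := (\big[Num.max/0]_(i < n) absK (mu i) ^+ 2) *
            \sum_(i < n) nz i ^+ 2 in
  let A2 (alpha beta : R) :=
            powR (\sum_(i < n) powR (absK (mu i)) (2 * alpha)) alpha^-1 *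
            powR (\sum_(i < n) powR (nz i) (2 * beta)) beta^-1 in
  let A3 := (\sum_(i < n) absK (mu i) ^+ 2) * \big[Num.max/0]_(i < n) nz i ^+ 2 in
  let B1 := (\big[Num.max/0]_(i < n) absK (mu i) ^+ 2) *
            \sum_(i < n) \sum_(j < n | j != i) absK (ip (zs i) (zs j) z) in
  let B2 (gamma delta : R) :=
            powR (n.-1)%:R gamma^-1 *
            powR (\sum_(i < n) powR (absK (mu i)) (2 * gamma)) gamma^-1 *
            powR (\sum_(i < n) \sum_(j < n | j != i)
                    powR (absK (ip (zs i) (zs j) z)) delta) delta^-1 in
  let B3 := (n.-1)%:R * (\sum_(i < n) absK (mu i) ^+ 2) *
            \big[Num.max/0]_(i < n) \big[Num.max/0]_(j < n | j != i)
                 absK (ip (zs i) (zs j) z) in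
  forall (alpha beta gamma delta : R),
    1 < alpha -> alpha^-1 + beta^-1 = 1 ->
    1 < gamma -> gamma^-1 + delta^-1 = 1 ->
  forall A B : R,
    (A = A1 \/ A = A2 alpha beta \/ A = A3) ->
    (B = B1 \/ B = B2 gamma delta \/ B = B3) ->
    tnorm ip (\sum_(i < n) mu i *: zs i) z ^+ 2 <= A + B.
End Cor.

(* Expanding the 2-inner product in both arguments and using the triangle
   inequality, ||sum_i mu_i z_i | z||^2 <= sum_(i,j) |mu_i| |mu_j| |(z_i,z_j|z)|.
   Off the diagonal, 2 |mu_i| |mu_j| <= |mu_i|^2 + |mu_j|^2 together with
   |(z_i,z_j|z)| = |(z_j,z_i|z)| bounds that part by
   sum_(i<>j) |mu_i|^2 |(z_i,z_j|z)|.  Every A bounds the diagonal sum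
   sum_i |mu_i|^2 ||z_i|z||^2 and every B this off-diagonal sum, either by
   pulling out a maximum or by Hoelder's inequality; for B2 Hoelder is applied
   over the pairs i <> j, on which each |mu_i|^(2 gamma) occurs n - 1 times. *)

From mathcomp Require Import all_boot all_order all_algebra.
From mathcomp Require Import reals exp.
From mathcomp Require Import complex.
From mathcomp Require Import ring lra.
Set Implicit Arguments. Unset Strict Implicit. Unset Printing Implicit Defensive.
Import Order.TTheory GRing.Theory Num.Theory.
Local Open Scope ring_scope.

Section Hoelder.
Variables (R : realType) (T : finType) (P : pred T).
Variables (p q : R).
Hypotheses (p_gt0 : 0 < p) (q_gt0 : 0 < q) (pq : p^-1 + q^-1 = 1).

Lemma hoelder_sum_normalized (f g : T -> R) :
  (forall k, 0 <= f k) -> (forall k, 0 <= g k) ->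
  \sum_(k | P k) f k `^ p = 1 -> \sum_(k | P k) g k `^ q = 1 ->
  \sum_(k | P k) f k * g k <= 1.
Proof.
move=> f_ge0 g_ge0 f1 g1.
apply: le_trans (_ : \sum_(k | P k) (f k `^ p / p + g k `^ q / q) <= 1).
  by apply: ler_sum => k _; apply: conjugate_powR.
by rewrite big_split /= -!mulr_suml f1 g1 !mul1r pq.
Qed.

Lemma sum_powR_normalized (f : T -> R) (r : R) : 0 < r ->
  (forall k, 0 <= f k) -> \sum_(k | P k) f k `^ r != 0 ->
  \sum_(k | P k) (f k / (\sum_(k | P k) f k `^ r) `^ r^-1) `^ r = 1.
Proof.
move=> r_gt0 f_ge0; set S := \sum_(k | P k) _ => S_neq0.
have S_ge0 : 0 <= S by apply: sumr_ge0 => k _; apply: powR_ge0.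
have rootK : (S `^ r^-1) `^ r = S by rewrite -powRrM mulVf ?gt_eqF ?powRr1.
have invK : (S `^ r^-1)^-1 `^ r = S^-1.
  by rewrite -powR_inv1 ?powR_ge0 // -powRrM mulrC powRrM rootK powR_inv1.
under eq_bigr => k _ do rewrite powRM ?invr_ge0 ?powR_ge0 // invK.
by rewrite -mulr_suml mulfV.
Qed.

Lemma sum_mul_eq0_of_sum_powR_eq0 (f g : T -> R) (r : R) :
  (forall k, 0 <= f k) -> \sum_(k | P k) f k `^ r = 0 ->
  \sum_(k | P k) f k * g k = 0.
Proof.
move=> f_ge0 /(psumr_eq0P (fun k _ => powR_ge0 _ _)) f0.
by apply: big1 => k Pk; rewrite (powR_eq0_eq0 (f0 k Pk)) mul0r.
Qed.

Lemma hoelder_sum (f g : T -> R) :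
  (forall k, 0 <= f k) -> (forall k, 0 <= g k) ->
  \sum_(k | P k) f k * g k <=
  (\sum_(k | P k) f k `^ p) `^ p^-1 * (\sum_(k | P k) g k `^ q) `^ q^-1.
Proof.
move=> f_ge0 g_ge0.
set Sf := \sum_(k | P k) f k `^ p; set Sg := \sum_(k | P k) g k `^ q.
have [Sf0|Sf_neq0] := eqVneq Sf 0.
  by rewrite (sum_mul_eq0_of_sum_powR_eq0 g f_ge0 Sf0) mulr_ge0 // powR_ge0.
have [Sg0|Sg_neq0] := eqVneq Sg 0.
  under eq_bigr do rewrite mulrC.
  by rewrite (sum_mul_eq0_of_sum_powR_eq0 f g_ge0 Sg0) mulr_ge0 // powR_ge0.
have Sf_ge0 : 0 <= Sf by apply: sumr_ge0 => k _; apply: powR_ge0.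
have Sg_ge0 : 0 <= Sg by apply: sumr_ge0 => k _; apply: powR_ge0.
have F_gt0 : 0 < Sf `^ p^-1 by rewrite powR_gt0 // lt0r Sf_neq0.
have G_gt0 : 0 < Sg `^ q^-1 by rewrite powR_gt0 // lt0r Sg_neq0.
have f1 := sum_powR_normalized p_gt0 f_ge0 Sf_neq0.
have g1 := sum_powR_normalized q_gt0 g_ge0 Sg_neq0.
rewrite -/Sf -/Sg in f1 g1.
move: (Sf `^ p^-1) (Sg `^ q^-1) F_gt0 G_gt0 f1 g1 => F G F_gt0 G_gt0 f1 g1.
have normalized : \sum_(k | P k) (f k / F) * (g k / G) <= 1.
  apply: (hoelder_sum_normalized (f := fun k => f k / F) (g := fun k => g k / G)) => //.
  - by move=> k; rewrite divr_ge0 // ltW.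
  - by move=> k; rewrite divr_ge0 // ltW.
rewrite [leLHS](_ : _ = F * G * \sum_(k | P k) (f k / F) * (g k / G)).
  by rewrite ler_piMr // mulr_ge0 // ltW.
rewrite mulr_sumr; apply: eq_bigr => k _.
by field; rewrite !gt_eqF.
Qed.
End Hoelder.

Lemma conjugate_exponent_gt0 (R : realFieldType) (p q : R) :
  1 < p -> p^-1 + q^-1 = 1 -> 0 < q.
Proof.
move=> p_gt1 pq; rewrite -invr_gt0.
have : p^-1 < 1 by rewrite invf_lt1 // (lt_trans ltr01).
by move: pq; move: p^-1 q^-1 => x y; lra.
Qed.

Lemma powRrM_sqr (R : realType) (x r : R) : 0 <= x -> x `^ (2 * r) = (x ^+ 2) `^ r.
Proof. by move=> x_ge0; rewrite powRrM (powR_mulrn 2 x_ge0). Qed.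

Lemma sumr_const_neq (R : nmodType) (T : finType) (i : T) (x : R) :
  \sum_(j | j != i) x = x *+ #|T|.-1.
Proof. by rewrite sumr_const cardC1. Qed.

Section DiagonalBounds.
Variables (R : realType) (T : finType) (m d : T -> R).

Lemma diag_le_max_sum :
  \sum_i m i ^+ 2 * d i ^+ 2 <= (\big[Num.max/0]_i m i ^+ 2) * \sum_i d i ^+ 2.
Proof.
rewrite mulr_sumr; apply: ler_sum => i _; rewrite ler_wpM2r ?sqr_ge0 //.
exact: le_bigmax.
Qed.

Lemma diag_le_sum_max :
  \sum_i m i ^+ 2 * d i ^+ 2 <= (\sum_i m i ^+ 2) * \big[Num.max/0]_i d i ^+ 2.
Proof.
rewrite mulr_suml; apply: ler_sum => i _; rewrite ler_wpM2l ?sqr_ge0 //.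
exact: le_bigmax.
Qed.

Lemma diag_le_hoelder (alpha beta : R) :
  (forall i, 0 <= m i) -> (forall i, 0 <= d i) ->
  1 < alpha -> alpha^-1 + beta^-1 = 1 ->
  \sum_i m i ^+ 2 * d i ^+ 2 <=
  (\sum_i m i `^ (2 * alpha)) `^ alpha^-1 * (\sum_i d i `^ (2 * beta)) `^ beta^-1.
Proof.
move=> m_ge0 d_ge0 alpha_gt1 ab.
have alpha_gt0 : 0 < alpha := lt_trans ltr01 alpha_gt1.
have beta_gt0 : 0 < beta := conjugate_exponent_gt0 alpha_gt1 ab.
have -> : \sum_i m i `^ (2 * alpha) = \sum_i (m i ^+ 2) `^ alpha.
  by apply: eq_bigr => i _; rewrite powRrM_sqr.
have -> : \sum_i d i `^ (2 * beta) = \sum_i (d i ^+ 2) `^ beta.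
  by apply: eq_bigr => i _; rewrite powRrM_sqr.
by apply: hoelder_sum => // i; apply: sqr_ge0.
Qed.

End DiagonalBounds.

Section OffDiagonalBounds.
Variables (R : realType) (T : finType) (m : T -> R) (c : T -> T -> R).

Lemma offdiag_mul_le_sqr :
  (forall i j, 0 <= c i j) -> (forall i j, c i j = c j i) ->
  \sum_i \sum_(j | j != i) m i * m j * c i j <=
  \sum_i \sum_(j | j != i) m i ^+ 2 * c i j.
Proof.
move=> c_ge0 c_sym.
have swap : \sum_i \sum_(j | j != i) m j ^+ 2 * c i j =
            \sum_i \sum_(j | j != i) m i ^+ 2 * c i j.
  rewrite (exchange_big_dep xpredT) //=; apply: eq_bigr => j _.
  by apply: eq_big => [i|i _]; rewrite 1?eq_sym // c_sym.
have amgm i j : m i * m j * c i j <= (m i ^+ 2 * c i j + m j ^+ 2 * c i j) / 2.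
  by have := mulr_ge0 (sqr_ge0 (m i - m j)) (c_ge0 i j); nra.
apply: (@le_trans _ _ (\sum_i \sum_(j | j != i)
                          (m i ^+ 2 * c i j + m j ^+ 2 * c i j) / 2)).
  by apply: ler_sum => i _; apply: ler_sum => j _; apply: amgm.
rewrite (eq_bigr (fun i => (\sum_(j | j != i) m i ^+ 2 * c i j +
                            \sum_(j | j != i) m j ^+ 2 * c i j) / 2)).
  by rewrite -mulr_suml big_split /= swap; lra.
by move=> i _; rewrite -mulr_suml big_split.
Qed.

Lemma offdiag_le_max_sum : (forall i j, 0 <= c i j) ->
  \sum_i \sum_(j | j != i) m i ^+ 2 * c i j <=
  (\big[Num.max/0]_i m i ^+ 2) * \sum_i \sum_(j | j != i) c i j.
Proof.
move=> c_ge0; rewrite mulr_sumr; apply: ler_sum => i _.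
rewrite mulr_sumr; apply: ler_sum => j _; rewrite ler_wpM2r //.
exact: le_bigmax.
Qed.

Lemma offdiag_le_sum_max :
  \sum_i \sum_(j | j != i) m i ^+ 2 * c i j <=
  (#|T|.-1)%:R * (\sum_i m i ^+ 2) *
  \big[Num.max/0]_i \big[Num.max/0]_(j | j != i) c i j.
Proof.
set M := \big[Num.max/0]_i _.
rewrite mulrAC mulr_sumr; apply: ler_sum => i _.
apply: le_trans (_ : \sum_(j | j != i) m i ^+ 2 * M <= _).
  apply: ler_sum => j ji; rewrite ler_wpM2l ?sqr_ge0 //.
  apply: le_trans (le_bigmax_cond 0 (c i) ji) _.
  exact: (le_bigmax 0 (fun i => \big[Num.max/0]_(j | j != i) c i j)).
by rewrite sumr_const_neq -[in leLHS]mulr_natl mulrCA mulrC.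
Qed.

Lemma offdiag_le_hoelder (gamma delta : R) :
  (forall i, 0 <= m i) -> (forall i j, 0 <= c i j) ->
  1 < gamma -> gamma^-1 + delta^-1 = 1 ->
  \sum_i \sum_(j | j != i) m i ^+ 2 * c i j <=
  (#|T|.-1)%:R `^ gamma^-1 * (\sum_i m i `^ (2 * gamma)) `^ gamma^-1 *
  (\sum_i \sum_(j | j != i) c i j `^ delta) `^ delta^-1.
Proof.
move=> m_ge0 c_ge0 gamma_gt1 gd.
have gamma_gt0 : 0 < gamma := lt_trans ltr01 gamma_gt1.
have delta_gt0 : 0 < delta := conjugate_exponent_gt0 gamma_gt1 gd.
have sum_ge0 : 0 <= \sum_i m i `^ (2 * gamma).
  by apply: sumr_ge0 => i _; apply: powR_ge0.
have count : (#|T|.-1)%:R * \sum_i m i `^ (2 * gamma) =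
             \sum_i \sum_(j | j != i) (m i ^+ 2) `^ gamma.
  rewrite mulr_sumr; apply: eq_bigr => i _.
  by rewrite sumr_const_neq powRrM_sqr // mulr_natl.
rewrite -powRM ?ler0n // count !(pair_big_dep xpredT (fun i j => j != i)) /=.
by apply: hoelder_sum => // -[i j]; apply: sqr_ge0.
Qed.

End OffDiagonalBounds.

Section AbsoluteValue.
Variables (R : realType) (K : numFieldType) (absK : K -> R) (cj : K -> K).
Hypotheses (absK_ge0 : forall x, 0 <= absK x)
           (absKM : forall x y, absK (x * y) = absK x * absK y)
           (absKD : forall x y, absK (x + y) <= absK x + absK y)
           (absK0 : absK 0 = 0)
           (absKJ : forall x, absK (cj x) = absK x).

Lemma absK_sum (I : finType) (F : I -> K) : absK (\sum_i F i) <= \sum_i absK (F i).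
Proof.
elim/big_ind2: _ => [|x1 x2 y1 y2 le1 le2|//]; first by rewrite absK0.
exact: le_trans (absKD _ _) (lerD le1 le2).
Qed.

Section TwoInnerProductSpace.
Variables (X : lmodType K) (ip : X -> X -> X -> K).
Hypothesis ip2 : is_2ip cj ip.

Lemma ip2D x x' y z : ip (x + x') y z = ip x y z + ip x' y z.
Proof. by have [_ /(_ x x' y z 0) [_ [_ [_ [_ [_ ->]]]]]] := ip2. Qed.

Lemma ip2Z a x y z : ip (a *: x) y z = a * ip x y z.
Proof. by have [_ /(_ x x y z a) [_ [_ [_ [_ [-> _]]]]]] := ip2. Qed.

Lemma ip2C x y z : ip y x z = cj (ip x y z).
Proof. by have [_ /(_ x x y z 0) [_ [_ [_ [-> _]]]]] := ip2. Qed.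

Lemma ip2_suml (I : finType) (mu : I -> K) (zs : I -> X) y z :
  ip (\sum_i mu i *: zs i) y z = \sum_i mu i * ip (zs i) y z.
Proof.
have ip0 : ip 0 y z = 0 by rewrite -(scale0r 0) ip2Z mul0r.
rewrite (big_morph (fun x => ip x y z) (fun x x' => ip2D x x' y z) ip0).
by apply: eq_bigr => i _; rewrite ip2Z.
Qed.

Lemma absK_ip_sym x y z : absK (ip y x z) = absK (ip x y z).
Proof. by rewrite ip2C absKJ. Qed.

Lemma absK_ip_suml (I : finType) (mu : I -> K) (zs : I -> X) y z :
  absK (ip (\sum_i mu i *: zs i) y z) <= \sum_i absK (mu i) * absK (ip (zs i) y z).
Proof.
rewrite ip2_suml; apply: le_trans (absK_sum _) _.
by apply: ler_sum => i _; rewrite absKM.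
Qed.

Lemma absK_ip_sum_sum (I : finType) (mu : I -> K) (zs : I -> X) z :
  absK (ip (\sum_i mu i *: zs i) (\sum_i mu i *: zs i) z) <=
  \sum_i \sum_j absK (mu i) * absK (mu j) * absK (ip (zs i) (zs j) z).
Proof.
apply: le_trans (absK_ip_suml _ _ _ _) _; apply: ler_sum => i _.
rewrite absK_ip_sym.
apply: le_trans (ler_wpM2l (absK_ge0 _) (absK_ip_suml _ _ _ _)) _.
by rewrite mulr_sumr; apply: ler_sum => j _; rewrite absK_ip_sym mulrA.
Qed.

Lemma tnorm_sum_sqr_le (I : finType) (mu : I -> K) (zs : I -> X) z :
  tnorm absK ip (\sum_i mu i *: zs i) z ^+ 2 <=
  \sum_i absK (mu i) ^+ 2 * tnorm absK ip (zs i) z ^+ 2 +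
  \sum_i \sum_(j | j != i) absK (mu i) ^+ 2 * absK (ip (zs i) (zs j) z).
Proof.
rewrite /tnorm sqr_sqrtr //; apply: le_trans (absK_ip_sum_sum _ _ _) _.
under eq_bigr => i _ do rewrite (bigD1 i) //= -expr2.
rewrite big_split /=; apply: lerD.
  by apply: ler_sum => i _; rewrite sqr_sqrtr.
apply: offdiag_mul_le_sqr => // i j.
exact: absK_ip_sym.
Qed.

End TwoInnerProductSpace.

Lemma cor24_claim_abs : cor24_claim absK cj.
Proof.
move=> X ip ip2 n _ zs z mu nz A1 A2 A3 B1 B2 B3 alpha beta gamma delta
  alpha_gt1 ab gamma_gt1 gd A B hA hB.
apply: le_trans (tnorm_sum_sqr_le ip2 mu zs z) _.
have mu_ge0 i : 0 <= absK (mu i) := absK_ge0 _.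
have nz_ge0 i : 0 <= nz i := sqrtr_ge0 _.
have ip_ge0 i j : 0 <= absK (ip (zs i) (zs j) z) := absK_ge0 _.
apply: lerD.
  case: hA => [->|[->|->]].
  - exact: diag_le_max_sum.
  - exact: diag_le_hoelder.
  - exact: diag_le_sum_max.
case: hB => [->|[->|->]].
- exact: offdiag_le_max_sum.
- by have := offdiag_le_hoelder mu_ge0 ip_ge0 gamma_gt1 gd; rewrite card_ord.
- by have := offdiag_le_sum_max (fun i => absK (mu i))
               (fun i j => absK (ip (zs i) (zs j) z)); rewrite card_ord.
Qed.

End AbsoluteValue.

Section ComplexModulus.
Variable R : realType.
Local Open Scope complex_scope.

Lemma Re_normc_ge0 (x : R[i]) : (0 <= complex.Re `|x|)%R.
Proof. by have := normr_ge0 x; rewrite lecE => /andP[_]. Qed.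

Lemma Re_normcM (x y : R[i]) :
  complex.Re `|x * y| = (complex.Re `|x| * complex.Re `|y|)%R.
Proof. by rewrite normrM !normc_def /= !mulr0 subr0. Qed.

Lemma Re_normcD (x y : R[i]) :
  (complex.Re `|x + y| <= complex.Re `|x| + complex.Re `|y|)%R.
Proof. by have := ler_normD x y; rewrite lecE => /andP[_]. Qed.

Lemma Re_normcJ (x : R[i]) : complex.Re `|x^*| = complex.Re `|x|.
Proof. by rewrite normcJ. Qed.

End ComplexModulus.

Theorem corollary2p4 (R : realType) :
  cor24_claim (fun x : R => `|x|) (fun x : R => x) /\
  cor24_claim (fun x : R[i] => complex.Re `|x|) (fun x : R[i] => x^*%C).
Proof.
split; apply: cor24_claim_abs.
- exact: normr_ge0.
- exact: normrM.
- exact: ler_normD.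
- exact: normr0.
- by [].
- exact: Re_normc_ge0.
- exact: Re_normcM.
- exact: Re_normcD.
- by rewrite normr0.
- exact: Re_normcJ.
Qed.
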